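(* Assume $\ell=2$. An observed law $\mathcal P$ of $(Y,D,Z)$ with $\mathcal P(Z=0),\mathcal P(Z=1)>0$ is induced by some full data law satisfying exclusion, random assignment and consistency if and only if $$\sum_{k\in[n]}-p_{k0,1}+\sum_{k\in T}(p_{k1,0}-p_{k1,1})\le 0\quad\text{for all nonempty }T\subseteq\{0,\dots,n-2\},$$ $$\sum_{k\in[n]}-p_{k1,0}+\sum_{k\in T}(p_{k0,1}-p_{k0,0})\le 0\quad\text{for all nonempty }T\subsetneq[n],$$ $$\sum_{k\in[n]}-p_{k0,0}+\sum_{k\in T}(p_{k1,1}-p_{k1,0})\le 0\quad\text{for all nonempty }T\subseteq\{0,\dots,n-2\}.$$
   Context: $D\in\{0,1\}$ treatment; $Y$ outcome with values $\gamma_0<\dots<\gamma_{n-1}$; instrument $Z\in\{0,1\}$; $[n]=\{0,\dots,n-1\}$. Potential outcomes $Y^{(d,z)}$, potential treatments $D^{(z)}$. Exclusion: $Y^{(d,0)}=Y^{(d,1)}$ a.s., written $Y^{(d)}$. Random assignment: $Z\perp(Y^{(0)},Y^{(1)},D^{(0)},D^{(1)})$. Consistency: $Y=(1-D)Y^{(0)}+DY^{(1)}$, $D=\mathbb 1(Z=0)D^{(0)}+\mathbb 1(Z=1)D^{(1)}$. A full data law is a joint law of $(Y^{(0)},Y^{(1)},D^{(0)},D^{(1)},Z)$, inducing the observed law of $(Y,D,Z)$. $p_{yd,z}=\mathcal P(Y=\gamma_y,D=d\mid Z=z)$. *)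

From HB Require Import structures.
From mathcomp Require Import all_boot all_order all_algebra.
From mathcomp Require Import reals.
Set Implicit Arguments. Unset Strict Implicit. Unset Printing Implicit Defensive.
Import Order.TTheory GRing.Theory Num.Theory.
Local Open Scope ring_scope.

Section IV.
Variables (R : realType) (n : nat).

(* Observed law of (Y, D, Z): P k d z = P(Y = gamma_k, D = d, Z = z),
   with d, z : bool (true = 1). *)
Definition obs_law (P : 'I_n -> bool -> bool -> R) : Prop :=
  (forall k d z, 0 <= P k d z) /\ \sum_(k < n) \sum_(d : bool) \sum_(z : bool) P k d z = 1.

Definition PZ (P : 'I_n -> bool -> bool -> R) (z : bool) : R :=
  \sum_(k < n) \sum_(d : bool) P k d z.

(* p_{kd,z} = P(Y = gamma_k, D = d | Z = z) *)
Definition pc (P : 'I_n -> bool -> bool -> R) (k : 'I_n) (d z : bool) : R :=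
  P k d z / PZ P z.

(* Full data law of (Y^(0,0), Y^(0,1), Y^(1,0), Y^(1,1), D^(0), D^(1), Z):
   q y00 y01 y10 y11 d0 d1 z. *)
Definition full_type := 'I_n -> 'I_n -> 'I_n -> 'I_n -> bool -> bool -> bool -> R.

Definition full_law (q : full_type) : Prop :=
  (forall y00 y01 y10 y11 d0 d1 z, 0 <= q y00 y01 y10 y11 d0 d1 z) /\
  \sum_(y00 < n) \sum_(y01 < n) \sum_(y10 < n) \sum_(y11 < n)
    \sum_(d0 : bool) \sum_(d1 : bool) \sum_(z : bool) q y00 y01 y10 y11 d0 d1 z = 1.

Definition exclusion (q : full_type) : Prop :=
  forall y00 y01 y10 y11 d0 d1 z, q y00 y01 y10 y11 d0 d1 z != 0 ->
    y00 = y01 /\ y10 = y11.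

Definition qZ (q : full_type) (z : bool) : R :=
  \sum_(y00 < n) \sum_(y01 < n) \sum_(y10 < n) \sum_(y11 < n)
    \sum_(d0 : bool) \sum_(d1 : bool) q y00 y01 y10 y11 d0 d1 z.

Definition random_assignment (q : full_type) : Prop :=
  forall y00 y01 y10 y11 d0 d1 z,
    q y00 y01 y10 y11 d0 d1 z =
    (\sum_(z' : bool) q y00 y01 y10 y11 d0 d1 z') * qZ q z.

Definition Dobs (d0 d1 z : bool) : bool := if z then d1 else d0.
Definition Yobs (y00 y01 y10 y11 : 'I_n) (d z : bool) : 'I_n :=
  match d, z with
  | false, false => y00 | false, true => y01
  | true, false => y10 | true, true => y11
  end.

Definition induces (q : full_type) (P : 'I_n -> bool -> bool -> R) : Prop :=
  forall k d z,
    P k d z =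
    \sum_(y00 < n) \sum_(y01 < n) \sum_(y10 < n) \sum_(y11 < n)
      \sum_(d0 : bool) \sum_(d1 : bool)
        (if (Dobs d0 d1 z == d) && (Yobs y00 y01 y10 y11 (Dobs d0 d1 z) z == k)
         then q y00 y01 y10 y11 d0 d1 z else 0).

End IV.

From HB Require Import structures.
From mathcomp Require Import all_boot all_order all_algebra.
From mathcomp Require Import reals lra zify.
Import Order.TTheory GRing.Theory Num.Theory.
Local Open Scope ring_scope.
Set Implicit Arguments. Unset Strict Implicit. Unset Printing Implicit Defensive.

(* By exclusion and random assignment, a full data law amounts to a law G of
   (Y^(0), Y^(1), D^(0), D^(1)) times an independent law of Z, and then
   p_{kd,z} = G(Y^(d) = k, D^(z) = d).  Using sum_k (p_{k0,z} + p_{k1,z}) = 1, each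
   family says sum_(k in T) p_{kd,z} + sum_(k notin T) p_{kd,1-z} <= 1 for proper T
   (families 1 and 3 are each other's complement in T), i.e. Pearl's instrumental
   inequality sum_k max_z p_{kd,z} <= 1.  It is necessary because the events
   {Y^(d) = k, D^(z_k) = d} are disjoint for distinct k.  For sufficiency, split the
   population by compliance type (D^(0), D^(1)): never-takers get the Y^(0)-law
   s0 min(p_{k0,0}, p_{k0,1}), always-takers the Y^(1)-law s1 min(p_{k1,0}, p_{k1,1}),
   compliers and defiers the remainders, and Y^(0), Y^(1) are coupled independently
   within each type.  The Y^(0)- and Y^(1)-masses of every type agree iff
   s0 sum_k min(p_{k0,0}, p_{k0,1}) - s1 sum_k min(p_{k1,0}, p_{k1,1})
     = P(D = 0 | Z = 0) - P(D = 1 | Z = 1),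
   and Pearl's inequalities are exactly what makes this solvable with s0, s1 in [0, 1]. *)

Section Selection.
Variables (R : realFieldType) (I : finType).
Implicit Types (x y w : I -> R) (T : {set I}).

Lemma sum_select_ineqE x y w T :
  \sum_i w i + \sum_i y i = 1 ->
  (\sum_i - w i + \sum_(i in T) (x i - y i) <= 0) <->
  (\sum_i (if i \in T then x i else y i) <= 1).
Proof.
move=> wy1.
have -> : \sum_i (if i \in T then x i else y i) =
          \sum_i y i + \sum_(i in T) (x i - y i).
  rewrite [\sum_(i in T) _]big_mkcond -big_split; apply: eq_bigr => i _ /=.
  by case: (i \in T); rewrite ?addr0 // addrC subrK.
by rewrite sumrN; split=> ?; lra.
Qed.

Lemma sum_max_le1 x y :
  \sum_i x i <= 1 -> \sum_i y i <= 1 ->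
  (forall T, T != set0 -> T != setT ->
     \sum_i (if i \in T then x i else y i) <= 1) ->
  \sum_i Num.max (x i) (y i) <= 1.
Proof.
move=> x1 y1 select1; set T := [set i | y i <= x i].
have -> : \sum_i Num.max (x i) (y i) = \sum_i (if i \in T then x i else y i).
  apply: eq_bigr => i _; rewrite inE.
  by case: leP => [/max_l | /ltW/max_r].
have [-> | T0] := eqVneq T set0.
  by under eq_bigr do rewrite in_set0.
have [-> | TT] := eqVneq T setT; last exact: select1.
by under eq_bigr do rewrite in_setT.
Qed.

End Selection.

Lemma select_le1_proper (R : realFieldType) (n : nat) (x y : 'I_n -> R) :
  (forall T : {set 'I_n}, T != set0 -> (forall k, k \in T -> (k.+1 < n)%N) ->
     \sum_k (if k \in T then x k else y k) <= 1) ->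
  (forall T : {set 'I_n}, T != set0 -> (forall k, k \in T -> (k.+1 < n)%N) ->
     \sum_k (if k \in T then y k else x k) <= 1) ->
  forall T : {set 'I_n}, T != set0 -> T != setT ->
     \sum_k (if k \in T then x k else y k) <= 1.
Proof.
move=> xy1 yx1 T T0 TT.
have [avoid | /forallPn [j]] := boolP [forall k, (k \in T) ==> (k.+1 < n)%N].
  by apply: xy1 => // k kT; have /implyP := forallP avoid k; apply.
rewrite negb_imply => /andP [jT j_last].
have -> : \sum_k (if k \in T then x k else y k) =
          \sum_k (if k \in ~: T then y k else x k).
  by apply: eq_bigr => k _; rewrite in_setC; case: (k \in T).
apply: yx1 => [|k]; first by rewrite -(inj_eq (@setC_inj _)) setCK setC0.
rewrite in_setC => kT; have /eqP kj : (k : nat) != j.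
  by apply: contraNneq kT => /val_inj ->.
by move: j_last (ltn_ord k) (ltn_ord j) kj; lia.
Qed.

Section ProductCoupling.
Variables (R : realFieldType) (I J : finType) (mu : I -> R) (nu : J -> R).

Definition prod_coupling i j := mu i * nu j / \sum_j nu j.

Hypotheses (mu_ge0 : forall i, 0 <= mu i) (nu_ge0 : forall j, 0 <= nu j)
  (same_mass : \sum_i mu i = \sum_j nu j).

Lemma prod_coupling_ge0 i j : 0 <= prod_coupling i j.
Proof. by rewrite divr_ge0 ?mulr_ge0 ?sumr_ge0. Qed.

Lemma sum_prod_coupling_r i : \sum_j prod_coupling i j = mu i.
Proof.
rewrite -mulr_suml -mulr_sumr.
have [nu0 | nuN0] := eqVneq (\sum_j nu j) 0; last by rewrite mulfK.
rewrite nu0 mulr0 mul0r; apply/esym/(psumr_eq0P (P := xpredT)) => //.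
by rewrite same_mass.
Qed.

Lemma sum_prod_coupling_l j : \sum_i prod_coupling i j = nu j.
Proof.
rewrite -mulr_suml -mulr_suml same_mass.
have [nu0 | nuN0] := eqVneq (\sum_j nu j) 0; last by rewrite mulrAC mulfV ?mul1r.
by rewrite nu0 !mul0r; apply/esym/(psumr_eq0P (P := xpredT)).
Qed.

End ProductCoupling.

Lemma sub_fraction_ge0 (R : realDomainType) (s m x : R) :
  0 <= s <= 1 -> 0 <= m -> m <= x -> 0 <= x - s * m.
Proof. by case/andP=> s_ge0 s_le1 m_ge0 m_le_x; nra. Qed.

Lemma exists_balancing_fractions (R : realFieldType) (a b d : R) :
  0 <= a -> 0 <= b -> - b <= d <= a ->
  exists s t, [/\ 0 <= s <= 1, 0 <= t <= 1 & s * a - t * b = d].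
Proof.
have fraction (c e : R) : 0 <= c -> 0 <= e <= c -> 0 <= e / c <= 1 /\ e / c * c = e.
  move=> c0 /andP [e0 ec]; have [c_eq0 | cN0] := eqVneq c 0.
    have -> : e = 0 by move: ec; rewrite c_eq0; lra.
    by rewrite !mul0r lexx ler01.
  have c_gt0 : 0 < c by rewrite lt_def cN0.
  by rewrite divr_ge0 // ler_pdivrMr // mul1r divfK.
move=> a0 b0 /andP [bd da]; have [d0 | d0] := leP 0 d.
  have [s01 sa] : 0 <= d / a <= 1 /\ d / a * a = d.
    by apply: fraction; rewrite ?d0 ?da.
  by exists (d / a), 0; rewrite sa mul0r subr0 lexx ler01.
have [t01 tb] : 0 <= - d / b <= 1 /\ - d / b * b = - d.
  by apply: fraction => //; apply/andP; split; lra.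
by exists 0, (- d / b); rewrite tb mul0r sub0r opprK lexx ler01.
Qed.

Section PotentialOutcomeLaws.
Variables (R : realFieldType) (n : nat).

(* [G y0 y1 d0 d1] is the mass of (Y^(0), Y^(1), D^(0), D^(1)) = (y0, y1, d0, d1). *)
Definition po_type := 'I_n -> 'I_n -> bool -> bool -> R.

Definition sum4 (G : po_type) : R :=
  \sum_(y0 < n) \sum_(y1 < n) \sum_(d0 : bool) \sum_(d1 : bool) G y0 y1 d0 d1.

Definition po_law (G : po_type) : Prop :=
  (forall y0 y1 d0 d1, 0 <= G y0 y1 d0 d1) /\ sum4 G = 1.

Definition obs (G : po_type) (k : 'I_n) (d z : bool) : R :=
  sum4 (fun y0 y1 d0 d1 =>
    if (Dobs d0 d1 z == d) && ((if d then y1 else y0) == k)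
    then G y0 y1 d0 d1 else 0).

Lemma sum4_sum (I : finType) (F : I -> po_type) :
  \sum_i sum4 (F i) = sum4 (fun y0 y1 d0 d1 => \sum_i F i y0 y1 d0 d1).
Proof. by rewrite /sum4; do 4 (rewrite exchange_big; apply: eq_bigr => ? _). Qed.

Lemma eq_sum4 (G G' : po_type) :
  (forall y0 y1 d0 d1, G y0 y1 d0 d1 = G' y0 y1 d0 d1) -> sum4 G = sum4 G'.
Proof. by move=> GG'; rewrite /sum4; do 4 (apply: eq_bigr => ? _). Qed.

Lemma sum4_le (G G' : po_type) :
  (forall y0 y1 d0 d1, G y0 y1 d0 d1 <= G' y0 y1 d0 d1) -> sum4 G <= sum4 G'.
Proof. by move=> GG'; rewrite /sum4; do 4 (apply: ler_sum => ? _). Qed.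

Lemma sum4_types (G : po_type) :
  sum4 G = \sum_(d0 : bool) \sum_(d1 : bool) \sum_(y0 < n) \sum_(y1 < n) G y0 y1 d0 d1.
Proof.
rewrite /sum4; under eq_bigr => y0 _ do
  (rewrite exchange_big; under eq_bigr => d0 _ do rewrite exchange_big).
by rewrite exchange_big; apply: eq_bigr => d0 _; rewrite exchange_big.
Qed.

Lemma sum_obs (G : po_type) z : \sum_k \sum_d obs G k d z = sum4 G.
Proof.
under eq_bigr do rewrite sum4_sum; rewrite sum4_sum.
apply: eq_sum4 => y0 y1 d0 d1; set D := Dobs d0 d1 z.
rewrite exchange_big (bigD1 D) //= [X in _ + X]big1 ?addr0 => [|d dD]; last first.
  by apply: big1 => k _; rewrite eq_sym (negbTE dD).
by rewrite eqxx -big_mkcond; apply: big_pred1 => k; exact: eq_sym.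
Qed.

Lemma obs_select_le1 (G : po_type) d z z' (T : {set 'I_n}) :
  po_law G -> \sum_k (if k \in T then obs G k d z else obs G k d z') <= 1.
Proof.
move=> [G_ge0 <-]; rewrite (eq_bigr (fun k => sum4 (fun y0 y1 d0 d1 =>
    if k \in T then (if (Dobs d0 d1 z == d) && ((if d then y1 else y0) == k)
                     then G y0 y1 d0 d1 else 0)
    else (if (Dobs d0 d1 z' == d) && ((if d then y1 else y0) == k)
          then G y0 y1 d0 d1 else 0)))); last by move=> k _; case: (k \in T).
rewrite sum4_sum; apply: sum4_le => y0 y1 d0 d1; set y := if d then y1 else y0.
rewrite (bigD1 y) //= big1 ?addr0 => [|k ky]; last first.
  by rewrite [y == k]eq_sym (negbTE ky) !andbF !if_same.
by rewrite eqxx !andbT; case: ifP => _; case: ifP.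
Qed.

Lemma obs_Y0 (G : po_type) k z :
  obs G k false z =
  \sum_(d0 : bool) \sum_(d1 : bool)
    (if Dobs d0 d1 z then 0 else \sum_(y1 < n) G k y1 d0 d1).
Proof.
rewrite /obs sum4_types; apply: eq_bigr => d0 _; apply: eq_bigr => d1 _.
case: (Dobs d0 d1 z) => /=; first by rewrite big1 // => y0 _; rewrite big1.
rewrite (bigD1 k) //= [X in _ + X]big1 ?addr0 => [|y0 /negbTE y0k]; last first.
  by rewrite big1 // => y1 _; rewrite y0k.
by apply: eq_bigr => y1 _; rewrite eqxx.
Qed.

Lemma obs_Y1 (G : po_type) k z :
  obs G k true z =
  \sum_(d0 : bool) \sum_(d1 : bool)
    (if Dobs d0 d1 z then \sum_(y0 < n) G y0 k d0 d1 else 0).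
Proof.
rewrite /obs sum4_types; apply: eq_bigr => d0 _; apply: eq_bigr => d1 _.
case: (Dobs d0 d1 z) => /=; last by rewrite big1 // => y0 _; rewrite big1.
by apply: eq_bigr => y0 _; rewrite -big_mkcond big_pred1_eq.
Qed.

End PotentialOutcomeLaws.

Section PearlSufficiency.
Variables (R : realFieldType) (n : nat) (p : bool -> bool -> 'I_n -> R).
Hypotheses (p_ge0 : forall d z k, 0 <= p d z k)
  (p_mass : forall z, \sum_k p false z k + \sum_k p true z k = 1)
  (pearl : forall d, \sum_k Num.max (p d false k) (p d true k) <= 1).

Definition overlap d k := Num.min (p d false k) (p d true k).

Lemma overlap_ge0 d k : 0 <= overlap d k.
Proof. by rewrite le_min !p_ge0. Qed.

Lemma overlap_le d z k : overlap d k <= p d z k.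
Proof. by rewrite ge_min; case: z; rewrite lexx ?orbT. Qed.

Lemma sum_overlap_bounds :
  - \sum_k overlap true k <= \sum_k p false false k - \sum_k p true true k
  <= \sum_k overlap false k.
Proof.
have sum_max d : \sum_k Num.max (p d false k) (p d true k) =
                 \sum_k p d false k + \sum_k p d true k - \sum_k overlap d k.
  rewrite -big_split -sumrB /=; apply: eq_bigr => k _.
  by have := addr_min_max (p d false k) (p d true k); rewrite /overlap; lra.
have := pearl false; have := pearl true; rewrite !sum_max.
by have := p_mass false; have := p_mass true; move=> *; apply/andP; split; lra.
Qed.

Section Fractions.
Variables (s0 s1 : R).
Hypotheses (s0_01 : 0 <= s0 <= 1) (s1_01 : 0 <= s1 <= 1)
  (balance : s0 * \sum_k overlap false k - s1 * \sum_k overlap true k =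
             \sum_k p false false k - \sum_k p true true k).

(* [profile0 d0 d1] and [profile1 d0 d1] are the laws of Y^(0) and Y^(1) on the
   compliance type (D^(0), D^(1)) = (d0, d1).  Y^(0) of always-takers and Y^(1)
   of never-takers are never observed: they get the profile of the other
   potential outcome, which has the right mass. *)
Definition profile0 d0 d1 k : R :=
  match d0, d1 with
  | false, false => s0 * overlap false k
  | false, true => p false false k - s0 * overlap false k
  | true, false => p false true k - s0 * overlap false k
  | true, true => s1 * overlap true k
  end.

Definition profile1 d0 d1 k : R :=
  match d0, d1 with
  | false, false => s0 * overlap false k
  | false, true => p true true k - s1 * overlap true k
  | true, false => p true false k - s1 * overlap true k
  | true, true => s1 * overlap true k
  end.

Definition pearl_po_law : po_type R n := fun y0 y1 d0 d1 =>
  prod_coupling (profile0 d0 d1) (profile1 d0 d1) y0 y1.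

Lemma profile0_ge0 d0 d1 k : 0 <= profile0 d0 d1 k.
Proof.
have [[s0_ge0 _] [s1_ge0 _]] := (andP s0_01, andP s1_01).
by case: d0; case: d1; rewrite /= ?mulr_ge0 ?sub_fraction_ge0 ?overlap_ge0 ?overlap_le.
Qed.

Lemma profile1_ge0 d0 d1 k : 0 <= profile1 d0 d1 k.
Proof.
have [[s0_ge0 _] [s1_ge0 _]] := (andP s0_01, andP s1_01).
by case: d0; case: d1; rewrite /= ?mulr_ge0 ?sub_fraction_ge0 ?overlap_ge0 ?overlap_le.
Qed.

Let sum_sub_scaled (x m : 'I_n -> R) (s : R) :
  \sum_k (x k - s * m k) = \sum_k x k - s * \sum_k m k.
Proof. by rewrite sumrB mulr_sumr. Qed.

Lemma profile_mass d0 d1 : \sum_k profile0 d0 d1 k = \sum_k profile1 d0 d1 k.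
Proof.
have := p_mass false; have := p_mass true.
by case: d0; case: d1 => // *; rewrite !sum_sub_scaled; move: balance; lra.
Qed.

Lemma sum_pearl_po_law_y1 d0 d1 y0 :
  \sum_y1 pearl_po_law y0 y1 d0 d1 = profile0 d0 d1 y0.
Proof.
exact: sum_prod_coupling_r (profile0_ge0 d0 d1) (profile_mass d0 d1) y0.
Qed.

Lemma sum_pearl_po_law_y0 d0 d1 y1 :
  \sum_y0 pearl_po_law y0 y1 d0 d1 = profile1 d0 d1 y1.
Proof.
exact: sum_prod_coupling_l (profile1_ge0 d0 d1) (profile_mass d0 d1) y1.
Qed.

Lemma po_law_pearl : po_law pearl_po_law.
Proof.
split=> [y0 y1 d0 d1|].
  exact: prod_coupling_ge0 (profile0_ge0 d0 d1) (profile1_ge0 d0 d1) y0 y1.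
rewrite sum4_types; under eq_bigr do under eq_bigr do
  under eq_bigr do rewrite sum_pearl_po_law_y1.
rewrite !big_bool /= -!mulr_sumr !sum_sub_scaled.
by have := p_mass true; move: balance; lra.
Qed.

Lemma obs_pearl_po_law k d z : obs pearl_po_law k d z = p d z k.
Proof.
case: d; [rewrite obs_Y1 | rewrite obs_Y0];
  rewrite !big_bool ?sum_pearl_po_law_y0 ?sum_pearl_po_law_y1;
  case: z => /=; lra.
Qed.

End Fractions.

Lemma pearl_sufficient :
  exists G : po_type R n, po_law G /\ forall k d z, obs G k d z = p d z k.
Proof.
have sum_overlap_ge0 d : 0 <= \sum_k overlap d k.
  by apply: sumr_ge0 => k _; exact: overlap_ge0.
have [s0 [s1 [s0_01 s1_01 balance]]] :=
  exists_balancing_fractions (sum_overlap_ge0 false) (sum_overlap_ge0 true)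
    sum_overlap_bounds.
exists (pearl_po_law s0 s1); split; first exact: po_law_pearl.
exact: obs_pearl_po_law.
Qed.

End PearlSufficiency.

Section FullDataLaws.
Variables (R : realType) (n : nat).
Implicit Types (q : full_type R n) (G : po_type R n) (P : 'I_n -> bool -> bool -> R).

Definition sum6 (F : 'I_n -> 'I_n -> 'I_n -> 'I_n -> bool -> bool -> R) : R :=
  \sum_(y00 < n) \sum_(y01 < n) \sum_(y10 < n) \sum_(y11 < n)
    \sum_(d0 : bool) \sum_(d1 : bool) F y00 y01 y10 y11 d0 d1.

Lemma eq_sum6 (F F' : 'I_n -> 'I_n -> 'I_n -> 'I_n -> bool -> bool -> R) :
  (forall y00 y01 y10 y11 d0 d1,
     F y00 y01 y10 y11 d0 d1 = F' y00 y01 y10 y11 d0 d1) ->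
  sum6 F = sum6 F'.
Proof. by move=> FF'; rewrite /sum6; do 6 (apply: eq_bigr => ? _). Qed.

Lemma sum6_mulr (F : 'I_n -> 'I_n -> 'I_n -> 'I_n -> bool -> bool -> R) x :
  sum6 F * x = sum6 (fun y00 y01 y10 y11 d0 d1 => F y00 y01 y10 y11 d0 d1 * x).
Proof. by rewrite /sum6; do 6 (rewrite mulr_suml; apply: eq_bigr => ? _). Qed.

Definition diag_po G : 'I_n -> 'I_n -> 'I_n -> 'I_n -> bool -> bool -> R :=
  fun y00 y01 y10 y11 d0 d1 =>
    if (y00 == y01) && (y10 == y11) then G y00 y10 d0 d1 else 0.

Lemma sum6_diag G : sum6 (diag_po G) = sum4 G.
Proof.
rewrite /sum6 /diag_po; apply: eq_bigr => y00 _.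
rewrite (bigD1 y00) //= [X in _ + X]big1 ?addr0 => [|y01 /negbTE y01N]; last first.
  by do 4 (apply: big1 => ? _); rewrite eq_sym y01N.
apply: eq_bigr => y10 _; rewrite eqxx.
rewrite (bigD1 y10) //= [X in _ + X]big1 ?addr0 => [|y11 /negbTE y11N]; last first.
  by do 2 (apply: big1 => ? _); rewrite eq_sym y11N.
by rewrite eqxx.
Qed.

Lemma sum6_obs G k d z :
  sum6 (fun y00 y01 y10 y11 d0 d1 =>
    if (Dobs d0 d1 z == d) && (Yobs y00 y01 y10 y11 (Dobs d0 d1 z) z == k)
    then diag_po G y00 y01 y10 y11 d0 d1 else 0) = obs G k d z.
Proof.
rewrite /obs -sum6_diag; apply: eq_sum6 => y00 y01 y10 y11 d0 d1; rewrite /diag_po.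
case: (y00 =P y01) => [<- | _]; last by rewrite !if_same.
case: (y10 =P y11) => [<- | _]; last by rewrite andbF !if_same.
have -> : Yobs y00 y00 y10 y10 (Dobs d0 d1 z) z = if Dobs d0 d1 z then y10 else y00.
  by case: (Dobs d0 d1 z); case: z.
by case: eqP => [-> |].
Qed.

Lemma exclusion_diag q : exclusion q -> forall z y00 y01 y10 y11 d0 d1,
  q y00 y01 y10 y11 d0 d1 z =
  diag_po (fun y0 y1 d0' d1' => q y0 y0 y1 y1 d0' d1' z) y00 y01 y10 y11 d0 d1.
Proof.
move=> excl z y00 y01 y10 y11 d0 d1; rewrite /diag_po.
case: ifP => [/andP [/eqP <- /eqP <-] // | not_diag].
by apply/eqP; apply: contraFT not_diag => /excl [-> ->]; rewrite !eqxx.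
Qed.

Definition po_of_full q : po_type R n :=
  fun y0 y1 d0 d1 => \sum_(z : bool) q y0 y0 y1 y1 d0 d1 z.

Lemma po_law_po_of_full q : full_law q -> exclusion q -> po_law (po_of_full q).
Proof.
move=> [q_ge0 q_sum1] excl; split=> [y0 y1 d0 d1 | ]; first exact: sumr_ge0.
rewrite -sum6_diag -q_sum1; apply: eq_sum6 => y00 y01 y10 y11 d0 d1.
under [RHS]eq_bigr do rewrite (exclusion_diag excl).
by rewrite /diag_po; case: ifP => // _; rewrite big1.
Qed.

Lemma obs_po_of_full q P :
  exclusion q -> random_assignment q -> induces q P ->
  forall k d z, P k d z = obs (po_of_full q) k d z * qZ q z.
Proof.
move=> excl ra ind k d z; rewrite ind -sum6_obs sum6_mulr.
apply: eq_sum6 => y00 y01 y10 y11 d0 d1; case: ifP => _; last by rewrite mul0r.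
by rewrite (exclusion_diag excl) /diag_po; case: ifP => _; rewrite ?mul0r ?ra.
Qed.

Lemma pc_po_of_full q P :
  (forall z, 0 < PZ P z) ->
  full_law q -> exclusion q -> random_assignment q -> induces q P ->
  forall k d z, pc P k d z = obs (po_of_full q) k d z.
Proof.
move=> PZ_gt0 fl excl ra ind; have PE := obs_po_of_full excl ra ind.
have PZE z : PZ P z = qZ q z.
  rewrite /PZ; under eq_bigr do under eq_bigr do rewrite PE.
  under eq_bigr do rewrite -mulr_suml.
  by rewrite -mulr_suml sum_obs (po_law_po_of_full fl excl).2 mul1r.
by move=> k d z; rewrite /pc PE PZE mulfK // -PZE lt0r_neq0.
Qed.

Lemma sum_PZ P : obs_law P -> \sum_(z : bool) PZ P z = 1.
Proof.
move=> [_ P_sum1]; rewrite /PZ exchange_big -P_sum1; apply: eq_bigr => k _.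
by rewrite exchange_big.
Qed.

Lemma pc_ge0 P k d z : obs_law P -> 0 < PZ P z -> 0 <= pc P k d z.
Proof. by move=> [P_ge0 _] PZ_gt0; rewrite divr_ge0 ?P_ge0 ?ltW. Qed.

Lemma pc_mass P z :
  0 < PZ P z -> \sum_k pc P k false z + \sum_k pc P k true z = 1.
Proof.
move=> PZ_gt0; rewrite -big_split /=; under eq_bigr do rewrite /pc -mulrDl.
rewrite -mulr_suml -[RHS](mulfV (lt0r_neq0 PZ_gt0)); congr (_ * _).
by apply: eq_bigr => k _; rewrite big_bool addrC.
Qed.

Lemma pc_sum_le1 P d z : obs_law P -> 0 < PZ P z -> \sum_k pc P k d z <= 1.
Proof.
move=> P_law PZ_gt0; have := pc_mass PZ_gt0.
have : 0 <= \sum_k pc P k (~~ d) z by apply: sumr_ge0 => k _; exact: pc_ge0.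
by case: d => /=; lra.
Qed.

Lemma pc_family_ineqE P : (forall z, 0 < PZ P z) -> forall d z (T : {set 'I_n}),
  (\sum_k - pc P k (~~ d) (~~ z) + \sum_(k in T) (pc P k d z - pc P k d (~~ z)) <= 0)
  <-> (\sum_k (if k \in T then pc P k d z else pc P k d (~~ z)) <= 1).
Proof.
move=> PZ_gt0 d z T; apply: sum_select_ineqE.
by have := pc_mass (PZ_gt0 (~~ z)); case: d; rewrite // addrC.
Qed.

Definition full_of_po G P : full_type R n :=
  fun y00 y01 y10 y11 d0 d1 z => diag_po G y00 y01 y10 y11 d0 d1 * PZ P z.

Lemma full_of_po_compatible G P :
  obs_law P -> (forall z, 0 < PZ P z) ->
  po_law G -> (forall k d z, pc P k d z = obs G k d z) ->
  let q := full_of_po G P in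
  full_law q /\ exclusion q /\ random_assignment q /\ induces q P.
Proof.
move=> P_law PZ_gt0 [G_ge0 G_sum1] PG q.
have diag_ge0 y00 y01 y10 y11 d0 d1 : 0 <= diag_po G y00 y01 y10 y11 d0 d1.
  by rewrite /diag_po; case: ifP.
have sum_q y00 y01 y10 y11 d0 d1 :
    \sum_(z : bool) q y00 y01 y10 y11 d0 d1 z = diag_po G y00 y01 y10 y11 d0 d1.
  by rewrite -mulr_sumr sum_PZ // mulr1.
have qZE z : qZ q z = PZ P z.
  transitivity (sum6 (fun y00 y01 y10 y11 d0 d1 =>
                  diag_po G y00 y01 y10 y11 d0 d1 * PZ P z)) => //.
  by rewrite -sum6_mulr sum6_diag G_sum1 mul1r.
split; [split | split; [|split]].
- by move=> *; rewrite mulr_ge0 ?diag_ge0 ?ltW.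
- transitivity (sum6 (fun y00 y01 y10 y11 d0 d1 =>
                  \sum_(z : bool) q y00 y01 y10 y11 d0 d1 z)) => //.
  by rewrite (eq_sum6 sum_q) sum6_diag.
- move=> y00 y01 y10 y11 d0 d1 z; rewrite /q /full_of_po /diag_po.
  by case: ifP => [/andP [/eqP -> /eqP ->] // | _]; rewrite mul0r eqxx.
- by move=> *; rewrite sum_q qZE.
move=> k d z; rewrite -(divfK (lt0r_neq0 (PZ_gt0 z)) (P k d z)) -/(pc P k d z) PG.
rewrite -sum6_obs sum6_mulr; apply: eq_sum6 => *.
by case: ifP; rewrite ?mul0r.
Qed.

Lemma exists_full_lawP P :
  obs_law P -> (forall z, 0 < PZ P z) ->
  (exists q : full_type R n,
     full_law q /\ exclusion q /\ random_assignment q /\ induces q P) <->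
  (exists G, po_law G /\ forall k d z, pc P k d z = obs G k d z).
Proof.
move=> P_law PZ_gt0; split=> [[q [fl [excl [ra ind]]]] | [G [G_law PG]]].
  exists (po_of_full q); split; first exact: po_law_po_of_full.
  exact: pc_po_of_full.
by exists (full_of_po G P); apply: full_of_po_compatible.
Qed.

End FullDataLaws.

Theorem theorem5 (R : realType) (n : nat) (P : 'I_n -> bool -> bool -> R) :
  obs_law P -> 0 < PZ P false -> 0 < PZ P true ->
  ((exists q : full_type R n,
      full_law q /\ exclusion q /\ random_assignment q /\ induces q P) <->
   ((forall T : {set 'I_n}, T != set0 -> (forall k, k \in T -> (k.+1 < n)%N) ->
       \sum_(k < n) - pc P k false true
       + \sum_(k in T) (pc P k true false - pc P k true true) <= 0) /\
    (forall T : {set 'I_n}, T != set0 -> T != setT ->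
       \sum_(k < n) - pc P k true false
       + \sum_(k in T) (pc P k false true - pc P k false false) <= 0) /\
    (forall T : {set 'I_n}, T != set0 -> (forall k, k \in T -> (k.+1 < n)%N) ->
       \sum_(k < n) - pc P k false false
       + \sum_(k in T) (pc P k true true - pc P k true false) <= 0))).
Proof.
move=> P_law PZ0 PZ1; have PZ_gt0 : forall z, 0 < PZ P z by case.
have family := pc_family_ineqE PZ_gt0.
rewrite exists_full_lawP //; split=> [[G [G_law PG]] | [fam1 [fam2 fam3]]].
  have select_le1 d z (T : {set 'I_n}) :
      \sum_k (if k \in T then pc P k d z else pc P k d (~~ z)) <= 1.
    by under eq_bigr do rewrite !PG; exact: obs_select_le1.
  split; [|split] => T _ _.
  - by apply/(family true false); apply: select_le1.
  - by apply/(family false true); apply: select_le1.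
  - by apply/(family true true); apply: select_le1.
have pearl d : \sum_k Num.max (pc P k d false) (pc P k d true) <= 1.
  case: d; [|under eq_bigr do rewrite maxC];
    apply: sum_max_le1 => [||T T0 TT]; rewrite ?pc_sum_le1 //.
    apply: select_le1_proper T0 TT => T' T'0 T'_avoid.
      by apply/(family true false); exact: fam1.
    by apply/(family true true); exact: fam3.
  by apply/(family false true); exact: fam2.
have [G [G_law obsG]] := pearl_sufficient
  (fun d z k => pc_ge0 k d P_law (PZ_gt0 z)) (fun z => pc_mass (PZ_gt0 z)) pearl.
by exists G; split=> // k d z; rewrite obsG.
Qed.
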